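(* Let $\mathcal G$ be a doubly connected molecular graph, and let $\mathcal M_1,\mathcal M_2,\mathcal M_3$ be any three molecules of $\mathcal G$. Construct $\mathcal G_{new}$ from $\mathcal G$ by adding a new molecule $\mathcal M_{new}$, a diffusive edge $b_1$ joining $\mathcal M_{new}$ and $\mathcal M_1$, a blue solid edge $b_2$ joining $\mathcal M_{new}$ and $\mathcal M_2$, and a blue solid edge $b_3$ joining $\mathcal M_{new}$ and $\mathcal M_3$. Then the blue solid edges $b_2$ and $b_3$ are both redundant in $\mathcal G_{new}$.
   Context: A molecular graph is a finite multigraph whose vertices are called molecules and each of whose edges joins two distinct molecules and is either a diffusive edge or a blue solid edge (parallel edges are allowed). A molecular graph is doubly connected if there exist two disjoint sets of edges, $\mathcal B_{black}$ consisting only of diffusive edges and $\mathcal B_{blue}$ consisting only of blue solid or diffusive edges, such that each of $\mathcal B_{black}$ and $\mathcal B_{blue}$ contains a spanning tree of the set of all molecules. A blue solid edge $e$ of a doubly connected graph is redundant if the graph obtained by deleting $e$ is still doubly connected. *)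

From mathcomp Require Import all_boot.
Set Implicit Arguments. Unset Strict Implicit. Unset Printing Implicit Defensive.

(* A molecular graph: molecules V (finType), edges E (finType), each edge e
   joins src e and dst e; dif e = true means e is a diffusive edge,
   dif e = false means e is a blue solid edge.  Parallel edges allowed. *)

Section MolGraph.
Variables (V E : finType) (src dst : E -> V) (dif : E -> bool).

Definition molecular_graph : Prop := forall e, src e != dst e.

Definition adj (B : {set E}) : rel V :=
  fun x y => [exists e in B, ((src e == x) && (dst e == y)) ||
                             ((src e == y) && (dst e == x))].

Definition spans_connected (B : {set E}) : Prop :=
  forall x y : V, connect (adj B) x y.

Definition spanning_tree (T : {set E}) : Prop :=
  spans_connected T /\ #|T|.+1 = #|V|.

Definition contains_spanning_tree (B : {set E}) : Prop :=
  exists2 T : {set E}, T \subset B & spanning_tree T.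

Definition doubly_connected_on (A : {set E}) : Prop :=
  exists Bblack Bblue : {set E},
    [/\ Bblack \subset A, Bblue \subset A, [disjoint Bblack & Bblue],
        (forall e, e \in Bblack -> dif e) &
        (contains_spanning_tree Bblack /\ contains_spanning_tree Bblue)].

Definition doubly_connected : Prop := doubly_connected_on [set: E].

Definition redundant (e : E) : Prop :=
  [/\ doubly_connected, dif e = false & doubly_connected_on [set~ e]].

End MolGraph.

(* The graph G_new: molecules option V (None = M_new), edges E + 'I_3,
   where inr 0 = b1 (diffusive, M_new -- M1), inr 1 = b2 (blue solid,
   M_new -- M2), inr 2 = b3 (blue solid, M_new -- M3). *)
Section NewGraph.
Variables (V E : finType) (src dst : E -> V) (dif : E -> bool) (M1 M2 M3 : V).

Definition new_src (e : E + 'I_3) : option V :=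
  match e with inl e' => Some (src e') | inr _ => None end.

Definition new_dst (e : E + 'I_3) : option V :=
  match e with
  | inl e' => Some (dst e')
  | inr i => if val i == 0 then Some M1 else if val i == 1 then Some M2 else Some M3
  end.

Definition new_dif (e : E + 'I_3) : bool :=
  match e with inl e' => dif e' | inr i => val i == 0 end.

End NewGraph.

Definition b1 {E : finType} : E + 'I_3 := inr (@Ordinal 3 0 isT).
Definition b2 {E : finType} : E + 'I_3 := inr (@Ordinal 3 1 isT).
Definition b3 {E : finType} : E + 'I_3 := inr (@Ordinal 3 2 isT).

From mathcomp Require Import all_boot.
Set Implicit Arguments. Unset Strict Implicit. Unset Printing Implicit Defensive.

(* Hang the new molecule as a leaf on both spanning trees of G: the diffusive
   edge b1 extends the black tree, and whichever blue edge is not deleted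
   extends the blue tree.  Adding a leaf to a spanning tree gives a spanning
   tree, so G_new stays doubly connected without b2, and likewise without b3. *)

Section DoublyConnected.
Variables (V E : finType) (src dst : E -> V) (dif : E -> bool).

Lemma adj_sym (B : {set E}) : symmetric (adj src dst B).
Proof.
by move=> x y; apply/existsP/existsP => -[e He]; exists e; rewrite orbC.
Qed.

Lemma doubly_connected_on_subset (A A' : {set E}) :
  A \subset A' -> doubly_connected_on src dst dif A ->
  doubly_connected_on src dst dif A'.
Proof.
move=> sAA' [Bk [Bu [sBk sBu ? ? ?]]].
by exists Bk, Bu; split; rewrite ?(subset_trans _ sAA').
Qed.

End DoublyConnected.

Section NewGraph.
Variables (V E : finType) (src dst : E -> V) (dif : E -> bool) (M1 M2 M3 : V).

Local Notation nsrc := (new_src src).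
Local Notation ndst := (new_dst dst M1 M2 M3).
Local Notation ndif := (new_dif dif).
Local Notation inl_set B := [set @inl E 'I_3 e | e in B].

Lemma inl_inj : injective (@inl E 'I_3).
Proof. by move=> e e' []. Qed.

Lemma mem_imset_inl (A : {set E}) (e : E) :
  (inl e \in inl_set A) = (e \in A).
Proof. exact/mem_imset/inl_inj. Qed.

Lemma inl_eq_inr (e : E) (i : 'I_3) : (inl e == inr i) = false.
Proof. by []. Qed.

Lemma inr_notin_imset_inl (A : {set E}) (i : 'I_3) :
  inr i \notin inl_set A.
Proof. by apply/imsetP => -[]. Qed.

Lemma connect_new_inl (B : {set E}) (B' : {set E + 'I_3}) (x y : V) :
  inl_set B \subset B' ->
  connect (adj src dst B) x y -> connect (adj nsrc ndst B') (Some x) (Some y).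
Proof.
move=> sBB' /connectP [p xp ->] {y}.
elim: p x xp => [|z p IHp] x /=; first by rewrite connect0.
case/andP=> /existsP [e /andP [eB exz]] zp; apply: connect_trans (IHp _ zp).
apply/connect1/existsP; exists (inl e).
by rewrite (subsetP sBB') ?mem_imset_inl.
Qed.

Lemma new_dst_inr (i : 'I_3) : exists M, ndst (inr i) = Some M.
Proof. by rewrite /=; case: ifP => _; [|case: ifP => _]; eexists. Qed.

Lemma spanning_tree_new (T : {set E}) (i : 'I_3) :
  spanning_tree src dst T -> spanning_tree nsrc ndst (inr i |: inl_set T).
Proof.
move=> [connT cardT]; split; last first.
  rewrite cardsU1 inr_notin_imset_inl card_imset ?card_option -?cardT //.
  exact: inl_inj.
set T' := _ |: _.
have sTT' : inl_set T \subset T' by exact: subsetU1.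
have [M HM] := new_dst_inr i.
have leaf_conn x : connect (adj nsrc ndst T') (Some x) None.
  apply: connect_trans (connect_new_inl sTT' (connT x M)) (connect1 _).
  by apply/existsP; exists (inr i); rewrite setU11 HM eqxx orbT.
have connT'sym := sym_connect_sym (adj_sym nsrc ndst T').
move=> [x|] [y|].
- exact: connect_new_inl sTT' (connT x y).
- exact: leaf_conn.
- by rewrite connT'sym; exact: leaf_conn.
- exact: connect0.
Qed.

Lemma contains_spanning_tree_new (B : {set E}) (i : 'I_3) :
  contains_spanning_tree src dst B ->
  contains_spanning_tree nsrc ndst (inr i |: inl_set B).
Proof.
move=> [T sTB treeT]; exists (inr i |: inl_set T); first by rewrite setUS ?imsetS.
exact: spanning_tree_new.
Qed.

Lemma doubly_connected_on_new (A : {set E}) (j : 'I_3) :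
  ~~ ndif (inr j) -> doubly_connected_on src dst dif A ->
  doubly_connected_on nsrc ndst ndif (b1 |: (inr j |: inl_set A)).
Proof.
move=> blue_j [Bk [Bu [sBkA sBuA disBkBu difBk [spanBk spanBu]]]].
exists (b1 |: inl_set Bk), (inr j |: inl_set Bu).
have b1_neq_j : b1 != inr j :> E + 'I_3 by apply: contraNneq blue_j => <-.
split.
- by rewrite setUS // (subset_trans _ (subsetU1 _ _)) // imsetS.
- by rewrite (subset_trans _ (subsetU1 _ _)) // setUS // imsetS.
- rewrite -setI_eq0; apply/eqP/setP => -[e|i]; rewrite !inE.
    rewrite !mem_imset_inl !inl_eq_inr /=.
    by case: (boolP (e \in Bk)) => // /(disjointFr disBkBu).
  rewrite !(negPf (inr_notin_imset_inl _ _)) !orbF.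
  by apply/negbTE; apply: contra b1_neq_j => /andP [/eqP <- /eqP <-].
- by move=> x /setU1P [-> // | /imsetP [e eBk ->]]; exact: difBk.
- by split; exact: contains_spanning_tree_new.
Qed.

Lemma redundant_new (j k : 'I_3) :
  ~~ ndif (inr j) -> ~~ ndif (inr k) -> j != k ->
  doubly_connected src dst dif -> redundant nsrc ndst ndif (inr k).
Proof.
move=> blue_j blue_k neq_jk dcG.
have dc_new := doubly_connected_on_new blue_j dcG.
split; first exact: doubly_connected_on_subset (subsetT _) dc_new.
  exact: negbTE.
apply: doubly_connected_on_subset dc_new; apply/subsetP => x.
rewrite !inE => /or3P [/eqP -> | /eqP -> | /imsetP [e _ ->] //].
  by apply: contraNneq blue_k => <-.
by rewrite (inj_eq (@inr_inj E _)).
Qed.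

End NewGraph.

Theorem claimA6 (V E : finType) (src dst : E -> V) (dif : E -> bool)
    (M1 M2 M3 : V) :
  molecular_graph src dst ->
  doubly_connected src dst dif ->
  redundant (new_src src) (new_dst dst M1 M2 M3) (new_dif dif) b2 /\
  redundant (new_src src) (new_dst dst M1 M2 M3) (new_dif dif) b3.
Proof.
move=> _ dcG; split.
- exact: (@redundant_new V E src dst dif M1 M2 M3 (Ordinal (isT : 2 < 3))).
- exact: (@redundant_new V E src dst dif M1 M2 M3 (Ordinal (isT : 1 < 3))).
Qed.
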